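(* Let $G=(V,E_1,\dots,E_k)$ be a complete $k$-edge-colored graph. Assume that for every $i\in\{1,\dots,k\}$ the monochromatic subgraph $G_{|i}$, together with some labeling $\ell_i$, is a simple permutation graph, and that the quotient graph $G[M]/\mathbb{P}_{\max}(M)$ of each strong prime module $M$ of $G$ with $|M|\ge 3$ is $2$-edge-colored. Then $G$ is a complete edge-colored permutation graph.
   Context: A complete $k$-edge-colored graph $G=(V,E_1,\dots,E_k)$ is the complete graph on a finite set $V$ with edges partitioned into $k$ nonempty color classes $E_i$ (the one-vertex graph also counts); $G_{|i}=(V,E_i)$. A labeling is a bijection $\ell:V\to\{1,\dots,|V|\}$. A graph $(V,E)$ with labeling $\ell$ is a simple permutation graph of a permutation $\pi$ if for all $u,v$ with $\ell(u)>\ell(v)$: $\{u,v\}\in E$ iff $\pi^{-1}(\ell(u))<\pi^{-1}(\ell(v))$. $G$ is a complete edge-colored permutation graph if there exist a single labeling $\ell$ and permutations $\pi_1,\dots,\pi_k$ with $(G_{|i},\ell)$ a simple permutation graph of $\pi_i$ for all $i$. A module is a set $M\subseteq V$ such that for every $v\notin M$ all edges $\{u,v\}$, $u\in M$, have the same color; a strong module is a nonempty module comparable by inclusion or disjoint with every other module. For a strong module $M$ with $|M|\ge2$, $\mathbb{P}_{\max}(M)$ is the set of inclusion-maximal strong modules properly contained in $M$, and $G[M]/\mathbb{P}_{\max}(M)$ is the complete graph on $\mathbb{P}_{\max}(M)$ with $\{M_a,M_b\}$ colored by the common color of all edges between $M_a$ and $M_b$; for $|M|=1$ it is the one-vertex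 graph. A strong module is series if its quotient graph has at least two vertices and all its edges have one color, and prime otherwise. *)

From mathcomp Require Import all_boot all_order.
From mathcomp Require Import fingroup perm.
Set Implicit Arguments. Unset Strict Implicit. Unset Printing Implicit Defensive.

Section EdgeColored.
Variables (V : finType) (k : nat).

(* A complete k-edge-colored graph on V is given by a symmetric coloring
   col : V -> V -> 'I_k of the pairs of vertices (values on the diagonal
   are irrelevant); every color class is nonempty unless |V| <= 1. *)
Definition complete_edge_colored (col : V -> V -> 'I_k) : Prop :=
  (forall u v, col u v = col v u) /\
  (1 < #|V| -> forall i : 'I_k, exists u v, u != v /\ col u v = i).

Definition color_graph (col : V -> V -> 'I_k) (i : 'I_k) : rel V :=
  fun u v => (u != v) && (col u v == i).

(* labeling : bijection V -> {1..n} (here {0..n-1}) *)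
Definition labeling (l : V -> 'I_#|V|) : Prop := bijective l.

Definition simple_perm_graph (E : rel V) (l : V -> 'I_#|V|) (pi : 'S_#|V|) : Prop :=
  forall u v, l v < l u -> (E u v <-> (pi^-1)%g (l u) < (pi^-1)%g (l v)).

Definition complete_edge_colored_perm_graph (col : V -> V -> 'I_k) : Prop :=
  exists l : V -> 'I_#|V|, labeling l /\
  exists pis : 'I_k -> 'S_#|V|,
    forall i, simple_perm_graph (color_graph col i) l (pis i).

Variable col : V -> V -> 'I_k.

Definition is_module (M : {set V}) : bool :=
  [forall v in ~: M, forall u in M, forall u' in M, col u v == col u' v].

Definition strong_module (M : {set V}) : bool :=
  (M != set0) && is_module M &&
  [forall M' : {set V}, is_module M' ==>
     [|| M \subset M', M' \subset M | [disjoint M & M']]].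

Definition Pmax (M : {set V}) : {set {set V}} :=
  [set M' : {set V} | [&& strong_module M', M' \proper M &
     [forall M'' : {set V}, (strong_module M'' && (M'' \proper M)) ==>
        (M' \subset M'') ==> (M'' == M')]]].

(* set of colors of the edges of the quotient graph G[M]/P_max(M): the edge
   {A,B} (A <> B in P_max(M)) carries the common color of all edges between
   A and B, so the colors occurring are exactly the colors of edges u-v with
   u in A, v in B for distinct A, B in P_max(M). *)
Definition quotient_colors (M : {set V}) : {set 'I_k} :=
  [set c : 'I_k | [exists A in Pmax M, exists B in Pmax M,
     (A != B) && [exists u in A, exists v in B, col u v == c]]].

Definition series_module (M : {set V}) : bool :=
  strong_module M && (1 < #|Pmax M|) && (#|quotient_colors M| == 1).

Definition prime_module (M : {set V}) : bool :=
  strong_module M && ~~ series_module M.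

End EdgeColored.

From mathcomp Require Import all_boot all_order.
From mathcomp Require Import fingroup perm.
From mathcomp Require Import zify.
Set Implicit Arguments. Unset Strict Implicit. Unset Printing Implicit Defensive.

(* Call an injective r : V -> nat a ranking of S when every triangle a, b, x
   of S with r a < r b < r x has col a x = col a b or col a x = col b x.  For
   each color c, r then orients both E_c and its complement transitively, so
   reversing r on the c-edges is again a linear order; the positions in these
   orders give the permutations of a common labeling.  A ranking of a strong
   module S is built lexicographically: first by a ranking of the quotient
   S/P_max(S), then by rankings of the children, obtained by induction.
   Triangles meeting two children are handled by the module property.
   Triangles across three children live in the quotient, whose edges carry at
   most two colors i and j; there the labeling of the permutation graph G_|i
   is a ranking, because with only two colors a triangle breaks the rule
   exactly when E_i or its complement is not transitive along the labeling. *)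

Lemma ltn_fun_neq (T : eqType) (f : T -> nat) u v : f u < f v -> u != v.
Proof. by apply: contraTneq => ->; rewrite ltnn. Qed.

Section OrderRank.
Variables (T : finType) (lt : rel T).
Hypotheses (ltT : transitive lt) (ltI : irreflexive lt)
  (lt_total : forall u v, u != v -> lt u v || lt v u).

Lemma card_below_lt_card u : #|[set w | lt w u]| < #|T|.
Proof.
rewrite -cardsT; apply/proper_card/properP.
by split=> //; exists u; rewrite ?inE ?ltI.
Qed.

Definition order_rank u : 'I_#|T| := Ordinal (card_below_lt_card u).

Lemma order_rank_mono u v : lt u v -> order_rank u < order_rank v.
Proof.
move=> uv; apply/proper_card/properP; split.
  by apply/subsetP=> w; rewrite !inE => /ltT; apply.
by exists u; rewrite !inE ?ltI.
Qed.

Lemma order_rank_ltE u v : (order_rank u < order_rank v) = lt u v.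
Proof.
apply/idP/idP=> [ruv|]; last exact: order_rank_mono.
have [uv|] := eqVneq u v; first by rewrite uv ltnn in ruv.
by case/lt_total/orP=> // /order_rank_mono; lia.
Qed.

Lemma order_rank_inj : injective order_rank.
Proof.
move=> u v ruv; have [//|/lt_total] := eqVneq u v.
by rewrite -!order_rank_ltE ruv ltnn.
Qed.
End OrderRank.

Section FlipOrder.
Variables (T : eqType) (r : T -> nat) (E : rel T).

Definition bitransitive := forall a b x,
  r a < r b -> r b < r x -> E a b = E b x -> E a x = E a b.

Definition flip_order : rel T :=
  fun u v => if E u v then r v < r u else r u < r v.

Hypotheses (r_inj : injective r) (E_sym : symmetric E) (E_bitr : bitransitive).

Lemma flip_order_irr : irreflexive flip_order.
Proof. by move=> u; rewrite /flip_order ltnn if_same. Qed.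

Lemma flip_order_total u v : u != v -> flip_order u v || flip_order v u.
Proof.
rewrite -(inj_eq r_inj) => ruv; rewrite /flip_order (E_sym v u).
by case: (E u v); rewrite orbC; case: ltngtP ruv.
Qed.

Lemma flip_order_trans : transitive flip_order.
Proof.
move=> v u w; rewrite /flip_order.
have [<-|] := eqVneq u w.
  by rewrite (E_sym v u); case: (E u v); lia.
rewrite -(inj_eq r_inj) => ruw.
move: E_bitr; rewrite /bitransitive => bt.
have t1 := bt u v w; have t2 := bt u w v; have t3 := bt v u w.
have t4 := bt v w u; have t5 := bt w u v; have t6 := bt w v u.
rewrite !(E_sym v u, E_sym w u, E_sym w v) in t1 t2 t3 t4 t5 t6 *.
by case: (E u v) (E v w) (E u w) t1 t2 t3 t4 t5 t6 => [] [] []; lia.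
Qed.
End FlipOrder.

Lemma perm_graph_bitransitive (V : finType) (E : rel V) l pi :
  symmetric E -> simple_perm_graph E l pi -> bitransitive (fun v => l v) E.
Proof.
move=> E_sym Epi a b x lab lbx; have lax := ltn_trans lab lbx.
rewrite (E_sym a b) (E_sym b x) (E_sym a x).
set p := fun v => (pi^-1)%g (l v) : nat.
have edge u v : l v < l u -> E u v = (p u < p v).
  by move=> luv; apply/idP/idP => /(Epi _ _ luv).
rewrite (edge _ _ lab) (edge _ _ lbx) (edge _ _ lax); lia.
Qed.

Lemma ltn_lex B a b c d : b < B -> d < B ->
  (a * B + b < c * B + d) = (a < c) || (a == c) && (b < d).
Proof.
by move=> bB dB; case: (ltngtP a c) => [||->]; rewrite ?ltn_add2l //=; nia.
Qed.

Lemma eqn_lex B a b c d : b < B -> d < B ->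
  (a * B + b == c * B + d) = (a == c) && (b == d).
Proof.
by move=> bB dB; case: (ltngtP a c) => [||->]; rewrite ?eqn_add2l //=; nia.
Qed.

Lemma two_color_triangle (T : eqType) (i j cab cbx cax : T) :
  cab \in [:: i; j] -> cbx \in [:: i; j] -> cax \in [:: i; j] ->
  ((cab == i) = (cbx == i) -> (cax == i) = (cab == i)) ->
  cax = cab \/ cax = cbx.
Proof.
rewrite !inE; have [->|ji] := eqVneq j i.
  by rewrite !orbb => /eqP-> /eqP-> /eqP->; left.
move=> /pred2P[]-> /pred2P[]-> /pred2P[]-> //; rewrite ?eqxx ?(negbTE ji);
  by [left | right | move/(_ erefl)].
Qed.

Section Partition.
Variables (T : finType) (P : {set {set T}}) (S : {set T}).
Hypothesis partP : partition P S.

Lemma partition_pblock_mem v : v \in S -> pblock P v \in P.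
Proof. by case/and3P: partP => /eqP <- _ _; apply: pblock_mem. Qed.

Lemma partition_mem_pblock v : v \in S -> v \in pblock P v.
Proof. by case/and3P: partP => /eqP covP _ _; rewrite mem_pblock covP. Qed.

Lemma partition_notin_pblock u w : u \in S -> pblock P u != pblock P w ->
  w \notin pblock P u.
Proof.
by case/and3P: partP => /eqP covP triP _ uS; rewrite eq_pblock ?covP. Qed.

Lemma partition_pblock_eq A B v :
  A \in P -> B \in P -> v \in A -> v \in B -> A = B.
Proof.
case/and3P: partP => _ triP _ AP BP vA vB.
by rewrite -(def_pblock triP AP vA) (def_pblock triP BP vB).
Qed.
End Partition.

Section ColoredGraph.
Variables (V : finType) (k : nat) (col : V -> V -> 'I_k).
Hypothesis colC : forall u v, col u v = col v u.

Lemma color_graph_sym c : symmetric (color_graph col c).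
Proof. by move=> u v; rewrite /color_graph eq_sym colC. Qed.

Lemma perm_graph_of_bitransitive (r : V -> nat) : injective r ->
  (forall c, bitransitive r (color_graph col c)) ->
  complete_edge_colored_perm_graph col.
Proof.
move=> r_inj r_bitr.
pose ltr u v := r u < r v.
have ltr_trans : transitive ltr by move=> u v w; apply: ltn_trans.
have ltr_irr : irreflexive ltr by move=> u; apply: ltnn.
have ltr_total u v : u != v -> ltr u v || ltr v u.
  by rewrite -(inj_eq r_inj) /ltr; case: ltngtP.
pose l := order_rank ltr_irr.
have [g lK gK] : bijective l.
  by apply: (inj_card_bij (order_rank_inj ltr_trans ltr_total)); rewrite card_ord.
pose flip c := flip_order r (color_graph col c).
have flip_trans c : transitive (flip c).
  exact: flip_order_trans r_inj (color_graph_sym c) (r_bitr c).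
have flip_total c u v : u != v -> flip c u v || flip c v u.
  exact: flip_order_total r_inj (color_graph_sym c) u v.
pose pos c := order_rank (flip_order_irr r (color_graph col c)).
have pos_inj c : injective (pos c \o g).
  exact: inj_comp (order_rank_inj (flip_trans c) (flip_total c)) (can_inj gK).
exists l; split; first by exists g.
(* pi_c^-1 maps the label of u to its position in flip c. *)
exists (fun c => (perm (pos_inj c))^-1)%g => c u v.
rewrite invgK !permE /= !lK (order_rank_ltE ltr_trans ltr_irr ltr_total).
rewrite (order_rank_ltE (flip_trans c) (flip_order_irr _ _) (flip_total c)).
rewrite /flip /flip_order /ltr => ruv.
by rewrite ruv ltnNge (ltnW ruv); case: (color_graph col c u v).
Qed.

Lemma module_col_eq (M : {set V}) u u' v : is_module col M -> v \notin M ->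
  u \in M -> u' \in M -> col u v = col u' v.
Proof.
move=> /forallP/(_ v); rewrite in_setC => /implyP modM vM uM u'M.
by move: (modM vM) => /forall_inP/(_ u uM)/forall_inP/(_ u' u'M)/eqP.
Qed.

Lemma col_between_modules (A B : {set V}) u u' w w' :
  is_module col A -> is_module col B -> [disjoint A & B] ->
  u \in A -> u' \in A -> w \in B -> w' \in B -> col u w = col u' w'.
Proof.
move=> modA modB AB uA u'A wB w'B.
rewrite (module_col_eq modA _ uA u'A) ?(disjointFl AB wB) // colC.
by rewrite (module_col_eq modB _ wB w'B) ?(disjointFr AB u'A) // colC.
Qed.

Lemma strong_moduleP (M : {set V}) : strong_module col M ->
  [/\ M != set0, is_module col M & forall M', is_module col M' ->
     [|| M \subset M', M' \subset M | [disjoint M & M']]].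
Proof.
case/andP=> /andP[M0 modM] /forallP strM; split=> // M'.
exact: implyP (strM M').
Qed.

Lemma strong_module_set1 v : strong_module col [set v].
Proof.
apply/andP; split; first (apply/andP; split).
- by apply/set0Pn; exists v; rewrite set11.
- apply/forall_inP=> w _; apply/forall_inP=> u /set1P->.
  by apply/forall_inP=> u' /set1P->.
- apply/forallP=> M; apply/implyP=> _; rewrite sub1set disjoints1.
  by case: (v \in M); rewrite ?orbT.
Qed.

Lemma strong_module_setT : [set: V] != set0 -> strong_module col [set: V].
Proof.
move=> V0; apply/andP; split; first (apply/andP; split) => //.
- by apply/forall_inP=> w; rewrite !inE.
- by apply/forallP=> M; apply/implyP=> _; rewrite subsetT orbT.
Qed.

Lemma PmaxP (S A : {set V}) : A \in Pmax col S ->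
  [/\ strong_module col A, A \proper S &
      forall M, strong_module col M -> M \proper S -> A \subset M -> M = A].
Proof.
rewrite inE => /and3P[strA AS /forallP maxA]; split=> // M strM MS AM.
by apply/eqP; move: (maxA M); rewrite strM MS AM.
Qed.

Lemma Pmax_cover (S : {set V}) v : 1 < #|S| -> v \in S ->
  exists2 A, A \in Pmax col S & v \in A.
Proof.
move=> S1 vS.
pose P M := [&& strong_module col M, M \proper S & v \in M].
have Pv : P [set v].
  by rewrite /P strong_module_set1 properEcard sub1set vS cards1 S1 set11.
case: (arg_maxnP (fun M : {set V} => #|M|) Pv) => A /and3P[strA AS vA] maxA.
exists A => //; rewrite inE strA AS; apply/forallP=> M.
apply/implyP=> /andP[strM MS]; apply/implyP=> AM.
by rewrite eq_sym eqEcard AM /=; apply: maxA; rewrite /P strM MS (subsetP AM).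
Qed.

Lemma Pmax_disjoint (S A B : {set V}) :
  A \in Pmax col S -> B \in Pmax col S -> A != B -> [disjoint A & B].
Proof.
move=> /PmaxP[strA AS maxA] /PmaxP[strB BS maxB] AB.
have [_ _ /(_ B) cmpAB] := strong_moduleP strA.
have [_ modB _] := strong_moduleP strB.
case/or3P: (cmpAB modB) => [/(maxA _ strB BS)|/(maxB _ strA AS)|//] eAB;
  by rewrite eAB eqxx in AB.
Qed.

Lemma Pmax_partition (S : {set V}) : strong_module col S -> 1 < #|S| ->
  partition (Pmax col S) S.
Proof.
move=> strS S1; apply/and3P; split.
- rewrite eqEsubset; apply/andP; split.
    by apply/bigcupsP=> A /PmaxP[_ /proper_sub].
  by apply/subsetP=> v /(Pmax_cover S1)[A AP vA]; apply/bigcupP; exists A.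
- by apply/trivIsetP=> A B; apply: Pmax_disjoint.
- by apply/negP=> /PmaxP[/strong_moduleP[]]; rewrite eqxx.
Qed.

Lemma mem_quotient_colors (S A B : {set V}) u w :
  A \in Pmax col S -> B \in Pmax col S -> A != B -> u \in A -> w \in B ->
  col u w \in quotient_colors col S.
Proof.
move=> AP BP AB uA wB; rewrite inE; apply/exists_inP; exists A => //.
apply/exists_inP; exists B => //; rewrite AB; apply/exists_inP; exists u => //.
by apply/exists_inP; exists w.
Qed.

Definition triangle_rule (S : {set V}) (r : V -> nat) :=
  {in S & &, forall a b x, r a < r b -> r b < r x ->
     col a x = col a b \/ col a x = col b x}.

Definition ranking (S : {set V}) (r : V -> nat) :=
  {in S &, injective r} /\ triangle_rule S r.

Lemma ranking_card_le2 (S : {set V}) : #|S| <= 2 -> exists r, ranking S r.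
Proof.
move=> S2; pose r (v : V) := nat_of_ord (enum_rank v); exists r.
split=> [u w _ _ /val_inj/enum_rank_inj //|a b x aS bS xS rab rbx].
suff: 2 < #|S| by rewrite ltnNge S2.
apply/card_gt2P; exists a, b, x; split; split=> //.
- exact: ltn_fun_neq rab.
- exact: ltn_fun_neq rbx.
- by rewrite eq_sym (ltn_fun_neq (ltn_trans rab rbx)).
Qed.

Lemma triangle_rule_bitransitive r c : triangle_rule [set: V] r ->
  bitransitive r (color_graph col c).
Proof.
move=> rule a b x rab rbx; have rax := ltn_trans rab rbx.
rewrite /color_graph !(ltn_fun_neq rab, ltn_fun_neq rbx, ltn_fun_neq rax) /=.
by case: (rule a b x) => // -> // ->.
Qed.

Section LexRanking.
Variables (S : {set V}) (P : {set {set V}}).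
Variables (Q : {set V} -> nat) (R : {set V} -> V -> nat).
Hypotheses (partP : partition P S) (modP : {in P, forall A, is_module col A}).
Hypotheses (Q_inj : {in P &, injective Q}).
Hypothesis R_rank : {in P, forall A, ranking A (R A)}.
Hypothesis Q_rule : triangle_rule S (fun v => Q (pblock P v)).

Let bound := (\max_v R (pblock P v) v).+1.

Definition lex_rank v := Q (pblock P v) * bound + R (pblock P v) v.

Let R_bound v : R (pblock P v) v < bound.
Proof. by rewrite ltnS (leq_bigmax v). Qed.

Let block_mem := partition_pblock_mem partP.
Let in_block := partition_mem_pblock partP.
Let notin_block := partition_notin_pblock partP.

Lemma lex_rank_ltE u w : (lex_rank u < lex_rank w) =
  (Q (pblock P u) < Q (pblock P w)) ||
  (Q (pblock P u) == Q (pblock P w)) && (R (pblock P u) u < R (pblock P w) w).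
Proof. exact: ltn_lex. Qed.

Let Q_lt u w : u \in S -> w \in S -> pblock P u != pblock P w ->
  lex_rank u < lex_rank w -> Q (pblock P u) < Q (pblock P w).
Proof.
move=> uS wS nuw; rewrite lex_rank_ltE => /orP[//|/andP[/eqP eQ _]].
by rewrite (Q_inj (block_mem uS) (block_mem wS) eQ) eqxx in nuw.
Qed.

Lemma lex_ranking : ranking S lex_rank.
Proof.
split=> [u w uS wS /eqP|a b x aS bS xS rab rbx].
  rewrite eqn_lex // => /andP[/eqP eQ /eqP eR].
  have euw := Q_inj (block_mem uS) (block_mem wS) eQ; rewrite euw in eR.
  apply: (R_rank (block_mem wS)).1 eR; last exact: in_block.
  by rewrite -euw in_block.
have aA := in_block aS; have bB := in_block bS.
have [eAB|nAB] := eqVneq (pblock P a) (pblock P b);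
  have [eBX|nBX] := eqVneq (pblock P b) (pblock P x).
- rewrite !lex_rank_ltE -eAB -eBX -eAB ltnn eqxx /= in rab rbx.
  have bA : b \in pblock P a by rewrite eAB.
  have xA : x \in pblock P a by rewrite eAB eBX in_block.
  exact: (R_rank (block_mem aS)).2.
- right; apply: module_col_eq (modP (block_mem aS)) _ aA _; last by rewrite eAB.
  by apply: notin_block; rewrite ?eAB.
- left; rewrite colC (colC a b).
  apply: module_col_eq (modP (block_mem bS)) _ _ bB; last by rewrite eBX in_block.
  by apply: notin_block; rewrite // eq_sym.
- by apply: Q_rule => //; apply: Q_lt.
Qed.
End LexRanking.

Section QuotientRanking.
Hypothesis perm_colors : forall i : 'I_k,
  exists l : V -> 'I_#|V|, labeling l /\
  exists pi : 'S_#|V|, simple_perm_graph (color_graph col i) l pi.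
Hypothesis prime_two_colors : forall M : {set V},
  prime_module col M -> 3 <= #|M| -> #|quotient_colors col M| = 2.

Lemma quotient_colors_pair (S : {set V}) : strong_module col S -> 3 <= #|S| ->
  exists i j, {subset quotient_colors col S <= [:: i; j]}.
Proof.
move=> strS S3.
case: (boolP (series_module col S)) => [/andP[_ /cards1P[c ->]]|nser].
  by exists c, c => c'; rewrite !inE => ->.
have /cards2P[i [j [_ ->]]] : #|quotient_colors col S| == 2.
  by rewrite prime_two_colors // /prime_module strS.
by exists i, j => c; rewrite !inE.
Qed.

Lemma quotient_rank (S : {set V}) : strong_module col S -> 3 <= #|S| ->
  exists Q : {set V} -> nat, {in Pmax col S &, injective Q} /\
    triangle_rule S (fun v => Q (pblock (Pmax col S) v)).
Proof.
move=> strS S3; have partS := Pmax_partition strS (ltnW S3).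
set P := Pmax col S.
have [i [j ij]] := quotient_colors_pair strS S3.
have [l [[l' lK _] [pi l_pi]]] := perm_colors i.
have [v0 _] : exists v0, v0 \in S by apply/card_gt0P; apply: leq_trans S3.
pose rep (A : {set V}) := odflt v0 [pick x in A].
have rep_in A : A \in P -> rep A \in A.
  case/PmaxP=> /strong_moduleP[/set0Pn[w wA] _ _] _ _.
  by rewrite /rep; case: pickP => [//|/(_ w)]; rewrite wA.
pose lr v := nat_of_ord (l v).
exists (fun A => lr (rep A)); split.
  move=> A B AP BP /val_inj/(can_inj lK) eAB.
  have repB : rep A \in B by rewrite eAB rep_in.
  exact: (partition_pblock_eq partS AP BP (rep_in A AP) repB).
have modP U : U \in P -> is_module col U by case/PmaxP=> /strong_moduleP[].
have edge u w : u \in S -> w \in S -> rep (pblock P u) != rep (pblock P w) ->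
    col u w = col (rep (pblock P u)) (rep (pblock P w)) /\ col u w \in [:: i; j].
  move=> uS wS nuw; have UP := partition_pblock_mem partS uS.
  have WP := partition_pblock_mem partS wS.
  have nUW : pblock P u != pblock P w by apply: contra_neq nuw => ->.
  have euw := col_between_modules (modP _ UP) (modP _ WP)
    (Pmax_disjoint UP WP nUW) (partition_mem_pblock partS uS) (rep_in _ UP)
    (partition_mem_pblock partS wS) (rep_in _ WP).
  split=> //; rewrite euw; apply: ij.
  exact: mem_quotient_colors UP WP nUW (rep_in _ UP) (rep_in _ WP).
move=> a b x aS bS xS /= lab lbx; have lax := ltn_trans lab lbx.
have [eab qab] := edge a b aS bS (ltn_fun_neq lab).
have [ebx qbx] := edge b x bS xS (ltn_fun_neq lbx).
have [eax qax] := edge a x aS xS (ltn_fun_neq lax).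
apply: two_color_triangle qab qbx qax _; rewrite eab ebx eax.
have := perm_graph_bitransitive (color_graph_sym i) l_pi lab lbx.
by rewrite /color_graph !(ltn_fun_neq lab, ltn_fun_neq lbx, ltn_fun_neq lax).
Qed.

Lemma strong_module_ranking (S : {set V}) : strong_module col S ->
  exists r, ranking S r.
Proof.
have [n] := ubnP #|S|; elim: n S => // n IH S /ltnSE leSn strS.
have [S2|S3] := leqP #|S| 2; first exact: ranking_card_le2.
have rank_ex A : exists r, A \in Pmax col S -> ranking A r.
  have [AP|_] := boolP (A \in Pmax col S); last by exists (fun _ => 0).
  have [strA AS _] := PmaxP AP.
  by have [r rA] := IH A (leq_trans (proper_card AS) leSn) strA; exists r.
have [R R_rank] := fin_all_exists rank_ex.
have [Q [Q_inj Q_rule]] := quotient_rank strS S3.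
exists (lex_rank (Pmax col S) Q R).
apply: lex_ranking (Pmax_partition strS (ltnW S3)) _ Q_inj _ Q_rule => //.
by move=> A /PmaxP[/strong_moduleP[]].
Qed.
End QuotientRanking.
End ColoredGraph.

Theorem lemma4p12 (V : finType) (k : nat) (col : V -> V -> 'I_k) :
  complete_edge_colored col ->
  (forall i : 'I_k, exists l : V -> 'I_#|V|, labeling l /\
     exists pi : 'S_#|V|, simple_perm_graph (color_graph col i) l pi) ->
  (forall M : {set V}, prime_module col M -> 3 <= #|M| ->
     #|quotient_colors col M| = 2) ->
  complete_edge_colored_perm_graph col.
Proof.
move=> [colC _] perm_colors prime_two_colors.
have [r [r_inj r_rule]] : exists r, ranking col [set: V] r.
  have [V2|V3] := leqP #|[set: V]| 2; first exact: ranking_card_le2.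
  apply: strong_module_ranking colC perm_colors prime_two_colors _ _.
  by apply: strong_module_setT; rewrite -card_gt0 (ltn_trans _ V3).
apply: (perm_graph_of_bitransitive colC (r := r)) => [u w|c].
  by apply: r_inj; rewrite inE.
exact: triangle_rule_bitransitive.
Qed.
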